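(* An $L$-layer RNN with $H$ heads, hidden dimension $m$ and precision $p$ cannot solve the permutation composition task $\mathsf{PerCom}$ on $[n]$ whenever $LHmp<\log(n!)$. The same holds for RNNs with chain-of-thought.
   Context: Permutation composition $\mathsf{PerCom}(\sigma,\tau)$: the input consists of two bijections $\sigma,\tau:[n]\to[n]$, given as $n$ tokens $\sigma(1),\dots,\sigma(n)$ followed by $n$ tokens $\tau(1),\dots,\tau(n)$. The required output is the sequence $\sigma(\tau(1)),\dots,\sigma(\tau(n))$. RNN layer (one head) with hidden dimension $m$ and precision $p$: one fixes $\mathrm{h}_0\in\mathbb{R}^m$ and computes $\mathrm{h}_i=g_{(i)}(x_i,\mathrm{h}_{i-1})\in\mathbb{R}^m$ and $y_i=f_{(i)}(x_i,\mathrm{h}_i)$ for arbitrary functions $g_{(i)},f_{(i)}$, with hidden states represented by $p$-bit numbers. An $L$-layer, $H$-head RNN stacks $L$ layers, each of $H$ parallel heads with concatenated outputs, interleaved with arbitrary position-wise maps. With chain-of-thought, the model autoregressively generates additional tokens after the input (each appended as a new position), and the answer is read from them. *)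

From mathcomp Require Import all_boot all_fingroup.
Set Implicit Arguments. Unset Strict Implicit. Unset Printing Implicit Defensive.

Definition state (m p : nat) := {ffun 'I_m -> p.-tuple bool}.

(* Vocabulary: the n values [n] (as 'I_n, 0-indexed) plus arbitrary extra
   chain-of-thought symbols W. *)
Definition tok (n : nat) (W : Type) := ('I_n + W)%type.

(* An L-layer, H-head RNN with hidden dimension m and precision p.
   V is an arbitrary type of intermediate (position-wise) values.
   - emb : token embedding (position-wise map before layer 1)
   - h0 l j : initial hidden state of head j of layer l
   - upd l j i : the update g_(i) of head j of layer l at position i
   - out l j i : the output map f_(i) of head j of layer l at position i
   - mix l i : arbitrary position-wise map applied to the concatenated head
               outputs of layer l at position i
   - nxt : read-out of a token from the final value at a position. *)
Record rnn (n : nat) (W V : Type) (L H m p : nat) := RNN {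
  emb : tok n W -> V;
  h0  : 'I_L -> 'I_H -> state m p;
  upd : 'I_L -> 'I_H -> nat -> V -> state m p -> state m p;
  out : 'I_L -> 'I_H -> nat -> V -> state m p -> V;
  mix : 'I_L -> nat -> ('I_H -> V) -> V;
  nxt : V -> tok n W }.

Section Run.
Variables (n : nat) (W V : Type) (L H m p : nat) (M : rnn n W V L H m p).

Fixpoint layer_run (l : 'I_L) (i : nat) (hs : 'I_H -> state m p) (xs : seq V)
  : seq V :=
  match xs with
  | [::] => [::]
  | x :: xs' =>
      let hs' := fun j => upd M l j i x (hs j) in
      mix M l i (fun j => out M l j i x (hs' j)) :: layer_run l i.+1 hs' xs'
  end.

Definition net_run (s : seq (tok n W)) : seq V :=
  foldl (fun vs l => layer_run l 0 (h0 M l) vs) (map (emb M) s) (enum 'I_L).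

Definition outputs (s : seq (tok n W)) : seq (tok n W) := map (nxt M) (net_run s).

Definition next_tok (x : tok n W) (xs : seq (tok n W)) : tok n W :=
  nxt M (last (emb M x) (net_run (x :: xs))).

Fixpoint gen (k : nat) (x : tok n W) (xs : seq (tok n W)) : seq (tok n W) :=
  match k with
  | 0 => [::]
  | k'.+1 => let z := next_tok x xs in z :: gen k' x (rcons xs z)
  end.

Definition cot_tokens (k : nat) (s : seq (tok n W)) : seq (tok n W) :=
  match s with [::] => [::] | x :: xs => gen k x xs end.

End Run.

Definition percom_input (n : nat) (W : Type) (s t : {perm 'I_n}) : seq (tok n W) :=
  [seq inl (s i) | i <- enum 'I_n] ++ [seq inl (t i) | i <- enum 'I_n].

Definition percom_answer (n : nat) (W : Type) (s t : {perm 'I_n}) : seq (tok n W) :=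
  [seq inl (s (t i)) | i <- enum 'I_n].

(* Without CoT: the outputs at the n positions of tau are sigma(tau(i)). *)
Definition solves_PerCom n W V L H m p (M : rnn n W V L H m p) : Prop :=
  forall s t : {perm 'I_n},
    drop n (outputs M (percom_input W s t)) = percom_answer W s t.

Definition solves_PerCom_CoT n W V L H m p (M : rnn n W V L H m p) (T : nat) : Prop :=
  forall s t : {perm 'I_n},
    drop (T - n) (cot_tokens M T (percom_input W s t)) = percom_answer W s t.

From mathcomp Require Import all_boot all_fingroup.
From Stdlib Require Import FunctionalExtensionality.
Set Implicit Arguments. Unset Strict Implicit. Unset Printing Implicit Defensive.

(* After reading sigma, everything the network carries forward is the tuple of
   final hidden states of its L * H heads, which takes at most 2 ^ (L H m p)
   values.  Two prefixes of equal length with the same such memory produce the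
   same outputs (and the same chain of thought) on any common continuation.
   Since 2 ^ (L H m p) < n!, two distinct sigma share a memory; with
   tau = id they receive the same answer although sigma o tau differs. *)

Section Memory.
Variables (n : nat) (W V : Type) (L H m p : nat) (M : rnn n W V L H m p).

Fixpoint layer_state (l : 'I_L) (i : nat) (hs : 'I_H -> state m p)
    (xs : seq V) : 'I_H -> state m p :=
  if xs is x :: xs' then layer_state l i.+1 (fun j => upd M l j i x (hs j)) xs'
  else hs.

Lemma layer_run_cat l i hs xs ys :
  layer_run M l i hs (xs ++ ys) =
  layer_run M l i hs xs ++ layer_run M l (i + size xs) (layer_state l i hs xs) ys.
Proof.
elim: xs i hs => [|x xs IH] i hs /=; first by rewrite addn0.
by rewrite IH addSnnS.
Qed.

Lemma size_layer_run l i hs xs : size (layer_run M l i hs xs) = size xs.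
Proof. by elim: xs i hs => //= x xs IH i hs; rewrite IH. Qed.

Definition run_layers (ls : seq 'I_L) (vs : seq V) : seq V :=
  foldl (fun vs l => layer_run M l 0 (h0 M l) vs) vs ls.

Fixpoint layers_memory (ls : seq 'I_L) (vs : seq V)
    : seq {ffun 'I_H -> state m p} :=
  if ls is l :: ls' then
    [ffun j => layer_state l 0 (h0 M l) vs j]
      :: layers_memory ls' (layer_run M l 0 (h0 M l) vs)
  else [::].

Lemma size_layers_memory ls vs : size (layers_memory ls vs) = size ls.
Proof. by elim: ls vs => //= l ls IH vs; rewrite IH. Qed.

Lemma run_layers_cat_memory ls vs1 vs2 ws :
    size vs1 = size vs2 -> layers_memory ls vs1 = layers_memory ls vs2 ->
  exists2 R, run_layers ls (vs1 ++ ws) = run_layers ls vs1 ++ R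
           & run_layers ls (vs2 ++ ws) = run_layers ls vs2 ++ R.
Proof.
rewrite /run_layers.
elim: ls vs1 vs2 ws => [|l ls IH] vs1 vs2 ws size12 /=; first by exists ws.
case=> /ffunP state12 mem12.
have {}state12 : layer_state l 0 (h0 M l) vs1 = layer_state l 0 (h0 M l) vs2.
  by apply: functional_extensionality => j; have := state12 j; rewrite !ffunE.
rewrite !layer_run_cat state12 size12.
by apply: IH; rewrite ?size_layer_run.
Qed.

Lemma memory_subproof (s : seq (tok n W)) :
  size (layers_memory (enum 'I_L) (map (emb M) s)) == L.
Proof. by rewrite size_layers_memory size_enum_ord. Qed.

Definition memory (s : seq (tok n W)) : L.-tuple {ffun 'I_H -> state m p} :=
  Tuple (memory_subproof s).

Lemma size_net_run s : size (net_run M s) = size s.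
Proof.
rewrite /net_run -(size_map (emb M) s); elim: (enum 'I_L) (map _ s) => //= l ls IH vs.
by rewrite IH size_layer_run.
Qed.

Lemma net_run_cat_memory pre1 pre2 zs :
    size pre1 = size pre2 -> memory pre1 = memory pre2 ->
  exists2 R, net_run M (pre1 ++ zs) = net_run M pre1 ++ R
           & net_run M (pre2 ++ zs) = net_run M pre2 ++ R.
Proof.
move=> size12 /(congr1 val) mem12; rewrite /net_run !map_cat.
by apply: run_layers_cat_memory; rewrite ?size_map.
Qed.

Lemma outputs_cat_memory pre1 pre2 zs :
    size pre1 = size pre2 -> memory pre1 = memory pre2 ->
  drop (size pre1) (outputs M (pre1 ++ zs)) =
  drop (size pre2) (outputs M (pre2 ++ zs)).
Proof.
move=> size12 mem12; rewrite /outputs.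
have [R -> ->] := net_run_cat_memory zs size12 mem12.
by rewrite !map_cat !drop_size_cat // size_map size_net_run.
Qed.

Lemma cot_tokens_cat_memory k pre1 pre2 zs :
    size pre1 = size pre2 -> memory pre1 = memory pre2 -> 0 < size zs ->
  cot_tokens M k (pre1 ++ zs) = cot_tokens M k (pre2 ++ zs).
Proof.
case: pre1 pre2 => [|x1 xs1] [|x2 xs2] // size12 mem12 /=.
elim: k zs => // k IH zs zs_gt0 /=.
have [R run1 run2] := net_run_cat_memory zs size12 mem12.
have size_R : size R = size zs.
  by move/(congr1 size): run1; rewrite size_cat !size_net_run size_cat => /addnI.
have -> : next_tok M x1 (xs1 ++ zs) = next_tok M x2 (xs2 ++ zs).
  rewrite /next_tok -!cat_cons run1 run2 !last_cat.
  by case: R size_R {run1 run2} => [|r R] /= size_R; first rewrite -size_R in zs_gt0.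
by rewrite !rcons_cat IH // size_rcons.
Qed.

Lemma card_memory :
  #|{: L.-tuple {ffun 'I_H -> state m p}}| = 2 ^ (L * H * m * p).
Proof.
rewrite card_tuple !card_ffun card_tuple card_bool !card_ord -!expnM.
by rewrite [p * _]mulnC (mulnC H) (mulnC m).
Qed.

End Memory.

Definition perm_tokens n W (s : {perm 'I_n}) : seq (tok n W) :=
  [seq inl (s i) | i <- enum 'I_n].

Lemma size_perm_tokens n W (s : {perm 'I_n}) : size (perm_tokens W s) = n.
Proof. by rewrite size_map size_enum_ord. Qed.

Lemma memory_collision n W V L H m p (M : rnn n W V L H m p) :
    2 ^ (L * H * m * p) < n`! ->
  exists s1, exists2 s2 : {perm 'I_n}, s1 != s2 &
    memory M (perm_tokens W s1) = memory M (perm_tokens W s2).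
Proof.
move=> hsmall; apply/injectivePn/negP => /injectiveP/leq_card.
by rewrite card_memory card_Sn leqNgt hsmall.
Qed.

Lemma percom_answer1_inj n W (s1 s2 : {perm 'I_n}) :
  percom_answer W s1 1%g = percom_answer W s2 1%g -> s1 = s2.
Proof.
move/eq_in_map => e; apply/permP => i.
by have := e i (mem_enum _ i); rewrite /= !perm1 => -[].
Qed.

Theorem theoremA7 (n L H m p : nat) (W V : Type)
  (hsmall : 2 ^ (L * H * m * p) < n`!) :
  (forall M : rnn n W V L H m p, ~ solves_PerCom M) /\
  (forall (M : rnn n W V L H m p) (T : nat), ~ solves_PerCom_CoT M T).
Proof.
have n_gt0 : 0 < n.
  by move: hsmall; case: n => //; rewrite fact0 ltnS leqn0 expn_eq0.
split=> [M solves | M T solves];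
  have [s1 [s2 /negP s12 mem12]] := memory_collision M hsmall;
  apply/s12/eqP/(@percom_answer1_inj _ W);
  have size12 := etrans (size_perm_tokens W s1) (esym (size_perm_tokens W s2));
  rewrite -(solves s1 1%g) -(solves s2 1%g).
- by have := outputs_cat_memory (perm_tokens W 1) size12 mem12;
    rewrite !size_perm_tokens.
- by rewrite (cot_tokens_cat_memory T size12 mem12) ?size_perm_tokens.
Qed.
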